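(* Let $(G,\sigma)$ be a connection graph and let $f:V\to\mathbb{R}^{d\times d}$ satisfy $(\mathcal{L}f)(x)=0_{d\times d}$ for all $x\in V$. Then for any $i,j\in V$, $f(i)=\Omega^0_{ij}f(j)$.
   Context: A connection graph $(G,\sigma)$: finite connected weighted graph $G=(V,E,W)$ with $w_{ij}>0$ iff $\{i,j\}\in E$, $\deg(i)=\sum_j w_{ij}$, and $\sigma$ mapping oriented edges to $\mathsf{O}(d)$ with $\sigma_{ji}=\sigma_{ij}^{\mathrm T}$. $(\mathcal{L}f)(i)=\sum_{j\sim i}w_{ij}(f(i)-\sigma_{ij}f(j))$. Let $(X_t)_{t\ge0}$ be the simple random walk on $G$ with transition probabilities $w_{ij}/\deg(i)$, and $\mathbb{E}^i$ the expectation given $X_0=i$. For $s\in\{0,1\}$ and $j\in V$, $T^s_j=\inf\{t\ge s: X_t=j\}$. The mean path signature is $\Omega^s_{ij}=\mathbb{E}^i\big[\prod_{\ell=1}^{T^s_j}\sigma_{X_{\ell-1}X_\ell}\big]$ (ordered product, empty product $=I_d$; so $\Omega^0_{ii}=I_d$). *)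

From HB Require Import structures.
From mathcomp Require Import all_boot all_order all_algebra.
From mathcomp Require Import all_classical all_reals all_analysis.
Set Implicit Arguments. Unset Strict Implicit. Unset Printing Implicit Defensive.
Import Order.TTheory GRing.Theory Num.Theory.
Local Open Scope ring_scope.

Section ConnGraph.
Variables (R : realType) (V : finType) (d : nat).
Variables (w : V -> V -> R) (sigma : V -> V -> 'M[R]_d).

Definition adj : rel V := fun i j => 0 < w i j.

Definition connection_graph : Prop :=
  [/\ forall i j, w i j = w j i,
      forall i j, 0 <= w i j,
      forall i, w i i = 0,
      forall i j, connect adj i j &
      forall i j, adj i j ->
        sigma i j *m (sigma i j)^T = 1%:M /\ sigma j i = (sigma i j)^T].

Definition deg (i : V) : R := \sum_(j : V) w i j.

Definition conn_laplacian (f : V -> 'M[R]_d) (i : V) : 'M[R]_d :=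
  \sum_(j : V) w i j *: (f i - sigma i j *m f j).

Definition trans (i j : V) : R := w i j / deg i.

(* a path of length n is p : 'I_(n+1) -> V, p k = X_k *)
Definition path_prob n (p : {ffun 'I_n.+1 -> V}) : R :=
  \prod_(k < n) trans (p (inord k)) (p (inord k.+1)).

Definition path_sig n (p : {ffun 'I_n.+1 -> V}) : 'M[R]_d :=
  \big[mulmx/1%:M]_(k < n) sigma (p (inord k)) (p (inord k.+1)).

(* paths from i whose first visit (at time >= 0) to j is at time n,
   i.e. the event {X_0..X_n = p, T^0_j = n} *)
Definition first_hit0 i j n (p : {ffun 'I_n.+1 -> V}) : bool :=
  [&& p ord0 == i, p ord_max == j & [forall k : 'I_n.+1, (k < n)%N ==> (p k != j)]].

Definition Omega0_term i j n : 'M[R]_d :=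
  \sum_(p : {ffun 'I_n.+1 -> V} | first_hit0 i j p) path_prob p *: path_sig p.

(* mean path signature Omega^0_ij = E^i[prod_{l=1}^{T^0_j} sigma_{X_{l-1} X_l}]
   = sum_{n >= 0} E^i[ ... ; T^0_j = n ], taken entrywise *)
Definition Omega0 i j : 'M[R]_d :=
  \matrix_(a < d, b < d) limn (fun N => \sum_(n < N) Omega0_term i j n a b).

End ConnGraph.

From mathcomp Require Import all_boot all_order all_algebra.
From mathcomp Require Import all_classical all_reals all_analysis.
From mathcomp Require Import ring lra.
Import numFieldNormedType.Exports.
Import Order.TTheory GRing.Theory Num.Theory.
Local Open Scope ring_scope.
Local Open Scope classical_set_scope.

(* Unfolding the harmonicity of f one step of the walk at a time, stopping
   at j, gives f x = S_N(x) f(j) + B_N(x) for every N, where S_N(x) is the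
   part of Omega^0_xj carried by the walks that reach j by time N and B_N(x)
   is carried by those that do not.  Every sigma being orthogonal, averaging
   over one step does not increase the squared Frobenius norm (Jensen), so
   |B_N(x)|^2 and |S_M(x) - S_N(x)|^2 (M >= N) are bounded by a constant
   times the probability q_N(x) that the walk avoids j up to time N.  The
   limit of q_N is nonnegative, harmonic off j and zero at j, hence zero by
   the maximum principle on the connected graph.  Thus S_N(x) -> Omega^0_xj
   and B_N(x) -> 0. *)

Lemma ltr_norm_sqr (R : realFieldType) (x e : R) :
  0 < e -> x ^+ 2 < e ^+ 2 -> `|x| < e.
Proof. by move=> e_gt0 x2_lt; rewrite ltr_norml; apply/andP; split; nra. Qed.

Lemma cvg0_sqr_le (R : realFieldType) (u v : R^nat) :
  (forall n, u n ^+ 2 <= v n) -> v @ \oo --> 0 -> u @ \oo --> 0.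
Proof.
move=> uv /cvgr0Pnorm_lt v_cvg0; apply/cvgr0Pnorm_lt => e e_gt0.
apply: filterS (v_cvg0 _ (exprn_gt0 2 e_gt0)) => n /= vn_lt.
exact/ltr_norm_sqr/(le_lt_trans (uv n))/(le_lt_trans (ler_norm _)).
Qed.

Lemma cvgn_sqr_increments (R : realType) (u v : R^nat) :
  (forall m n, (m <= n)%N -> (u n - u m) ^+ 2 <= v m) -> v @ \oo --> 0 ->
  cvgn u.
Proof.
move=> uv /cvgr0Pnorm_lt v_cvg0; apply/cauchy_cvgP/cauchy_ballP => e e_gt0.
have e2_gt0 : 0 < e / 2 by rewrite divr_gt0.
have [N _ vN] := v_cvg0 _ (exprn_gt0 2 e2_gt0).
have u_near n : (N <= n)%N -> `|u n - u N| < e / 2.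
  move=> Nn; apply: ltr_norm_sqr => //.
  exact: le_lt_trans (uv _ _ Nn) (le_lt_trans (ler_norm _) (vN N (leqnn N))).
rewrite near_map2; near=> m n; rewrite -ball_normE /=.
have Nm : (N <= m)%N by near: m; exists N.
have Nn : (N <= n)%N by near: n; exists N.
rewrite (_ : u m - u n = (u m - u N) - (u n - u N)); last by ring.
apply: le_lt_trans (ler_normB _ _) _.
by rewrite (splitr e) ltrD ?u_near.
Unshelve. all: by end_near.
Qed.

Lemma ler_sum_term {R : numDomainType} {I : finType} (F : I -> R) (i : I) :
  (forall k, 0 <= F k) -> F i <= \sum_k F k.
Proof.
by move=> F_ge0; rewrite (bigD1 i) //= lerDl sumr_ge0.
Qed.

Lemma sqr_wmean_le (R : realFieldType) (I : finType) (p u : I -> R) :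
  (forall i, 0 <= p i) -> \sum_i p i = 1 ->
  (\sum_i p i * u i) ^+ 2 <= \sum_i p i * u i ^+ 2.
Proof.
move=> p_ge0 p_sum1; set mu := \sum_i p i * u i.
have : 0 <= \sum_i p i * (u i - mu) ^+ 2.
  by apply: sumr_ge0 => i _; rewrite mulr_ge0 ?sqr_ge0.
rewrite (eq_bigr (fun i => p i * u i ^+ 2 - 2 * mu * (p i * u i) + mu ^+ 2 * p i));
  last by move=> i _; ring.
rewrite big_split /= sumrB -!mulr_sumr p_sum1 -/mu; lra.
Qed.

Section Frobenius.
Context {R : realFieldType}.

Definition frob2 {m n} (M : 'M[R]_(m, n)) : R := \sum_i \sum_k M i k ^+ 2.

Lemma frob2_ge0 {m n} (M : 'M[R]_(m, n)) : 0 <= frob2 M.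
Proof. by apply: sumr_ge0 => i _; apply: sumr_ge0 => k _; apply: sqr_ge0. Qed.

Lemma sqr_entry_le_frob2 {m n} (M : 'M[R]_(m, n)) i k : M i k ^+ 2 <= frob2 M.
Proof.
have row_le := ler_sum_term (fun k => M i k ^+ 2) k (fun _ => sqr_ge0 _).
apply: le_trans row_le (ler_sum_term (fun i => \sum_k M i k ^+ 2) i _) => i'.
by apply: sumr_ge0 => k' _; apply: sqr_ge0.
Qed.

Lemma frob2_trace {m n} (M : 'M[R]_(m, n)) : frob2 M = \tr (M^T *m M).
Proof.
rewrite /frob2 /mxtrace exchange_big; apply: eq_bigr => k _.
by rewrite !mxE; apply: eq_bigr => i _; rewrite mxE expr2.
Qed.

Lemma frob2_0 m n : frob2 (0 : 'M[R]_(m, n)) = 0.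
Proof. by rewrite frob2_trace mulmx0 linear0. Qed.

Lemma frob2_1 n : frob2 (1%:M : 'M[R]_n) = n%:R.
Proof. by rewrite frob2_trace trmx1 mulmx1 mxtrace1. Qed.

Lemma frob2_orthogonal {m n} (s : 'M[R]_m) (M : 'M[R]_(m, n)) :
  s *m s^T = 1%:M -> frob2 (s *m M) = frob2 M.
Proof.
move=> /mulmx1C sTs; rewrite !frob2_trace trmx_mul -mulmxA (mulmxA s^T).
by rewrite sTs mul1mx.
Qed.

Lemma frob2_convex {m n} {I : finType} (p : I -> R) (M : I -> 'M[R]_(m, n)) :
  (forall i, 0 <= p i) -> \sum_i p i = 1 ->
  frob2 (\sum_i p i *: M i) <= \sum_i p i * frob2 (M i).
Proof.
move=> p_ge0 p_sum1; rewrite /frob2; under [leRHS]eq_bigr do rewrite mulr_sumr.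
rewrite [leRHS]exchange_big; apply: ler_sum => a _.
under [leRHS]eq_bigr do rewrite mulr_sumr.
rewrite [leRHS]exchange_big; apply: ler_sum => b _.
rewrite summxE (eq_bigr (fun i => p i * M i a b)) => [|i _]; last by rewrite mxE.
exact: sqr_wmean_le.
Qed.

End Frobenius.

Section KilledWalk.
Context {R : realType} {V : finType} {d : nat}.
Variables (w : V -> V -> R) (sigma : V -> V -> 'M[R]_d) (j : V).
Hypothesis w_ge0 : forall x y, 0 <= w x y.
Hypothesis adj_connected : forall x y, connect (adj w) x y.
Hypothesis sigma_orthogonal :
  forall x y, adj w x y -> sigma x y *m (sigma x y)^T = 1%:M.

Local Notation P := (trans w).

Lemma deg_gt0 x : x != j -> 0 < deg w x.
Proof.
move=> xj; have /connectP [[|y p] /= xp xE] := adj_connected x j.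
  by rewrite xE eqxx in xj.
have /andP [xy _] := xp; have wxy_gt0 : 0 < w x y := xy.
exact: lt_le_trans wxy_gt0 (ler_sum_term (w x) y (w_ge0 x)).
Qed.

Lemma trans_ge0 x y : 0 <= P x y.
Proof. by rewrite /trans divr_ge0 ?sumr_ge0. Qed.

Lemma trans_gt0 x y : x != j -> adj w x y -> 0 < P x y.
Proof. by move=> xj xy; rewrite /trans divr_gt0 ?deg_gt0. Qed.

Lemma trans_eq0 x y : ~~ adj w x y -> P x y = 0.
Proof.
rewrite /adj -leNgt => wxy_le0.
by rewrite /trans (_ : w x y = 0) ?mul0r //; apply/le_anti; rewrite wxy_le0 w_ge0.
Qed.

Lemma sum_trans x : x != j -> \sum_y P x y = 1.
Proof. by move=> xj; rewrite -mulr_suml divff ?gt_eqF ?deg_gt0. Qed.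

Definition killed_step (r : V -> R) (x : V) : R :=
  if x == j then 0 else \sum_y P x y * r y.

Definition twisted_step (h : V -> 'M[R]_d) (x : V) : 'M[R]_d :=
  if x == j then 0 else \sum_y P x y *: (sigma x y *m h y).

Lemma killed_step_ge0 r x : (forall y, 0 <= r y) -> 0 <= killed_step r x.
Proof.
rewrite /killed_step => r_ge0; case: eqP => // _.
by apply: sumr_ge0 => y _; rewrite mulr_ge0 ?trans_ge0.
Qed.

Lemma killed_step_le r r' x :
  (forall y, r y <= r' y) -> killed_step r x <= killed_step r' x.
Proof.
rewrite /killed_step => rr'; case: eqP => // _.
by apply: ler_sum => y _; rewrite ler_wpM2l ?trans_ge0.
Qed.

Lemma twisted_stepD h h' x :
  twisted_step (fun y => h y + h' y) x = twisted_step h x + twisted_step h' x.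
Proof.
rewrite /twisted_step; case: eqP => _; first by rewrite addr0.
by rewrite -big_split; apply: eq_bigr => y _; rewrite mulmxDr scalerDr.
Qed.

Lemma twisted_stepB h h' x :
  twisted_step (fun y => h y - h' y) x = twisted_step h x - twisted_step h' x.
Proof.
rewrite /twisted_step; case: eqP => _; first by rewrite subr0.
by rewrite -sumrB; apply: eq_bigr => y _; rewrite mulmxBr scalerBr.
Qed.

Lemma twisted_step_mulmxr h (A : 'M[R]_d) x :
  twisted_step (fun y => h y *m A) x = twisted_step h x *m A.
Proof.
rewrite /twisted_step; case: eqP => _; first by rewrite mul0mx.
rewrite mulmx_suml; apply: eq_bigr => y _.
by rewrite -scalemxAl mulmxA.
Qed.

Lemma twisted_step_sum (I : finType) (h : I -> V -> 'M[R]_d) x :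
  twisted_step (fun y => \sum_i h i y) x = \sum_i twisted_step (h i) x.
Proof.
rewrite /twisted_step; case: eqP => _; first by rewrite big1.
rewrite exchange_big; apply: eq_bigr => y _.
by rewrite mulmx_sumr scaler_sumr.
Qed.

(* Jensen's inequality for frob2, plus orthogonality of sigma on edges. *)
Lemma frob2_twisted_step_le c h r x :
  (forall y, frob2 (h y) <= c * r y) ->
  frob2 (twisted_step h x) <= c * killed_step r x.
Proof.
rewrite /twisted_step /killed_step => hr; case: eqP => [_|/eqP xj].
  by rewrite frob2_0 mulr0.
apply: le_trans (frob2_convex _ _ (trans_ge0 x) (sum_trans x xj)) _.
rewrite mulr_sumr; apply: ler_sum => y _.
have [xy|/trans_eq0 ->] := boolP (adj w x y); last by rewrite !mul0r mulr0.
by rewrite frob2_orthogonal ?sigma_orthogonal // mulrCA ler_wpM2l ?trans_ge0.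
Qed.

Lemma killed_harmonic_eq0 r :
  (forall x, 0 <= r x) -> (forall x, r x = killed_step r x) -> forall x, r x = 0.
Proof.
move=> r_ge0 r_fix.
have [m _ r_argmax] := @arg_maxP _ _ V j xpredT r isT.
have r_max x : r x <= r m by exact: r_argmax.
suff rm0 : r m = 0.
  by move=> x; apply/le_anti; rewrite r_ge0 andbT -rm0 r_max.
have rj0 : r j = 0 by rewrite r_fix /killed_step eqxx.
have max_adj x y : adj w x y -> r x = r m -> r y = r m.
  move=> xy rx; case: (eqVneq x j) => [xj|xj].
    by apply/le_anti; rewrite r_max -rx xj rj0 r_ge0.
  have gap_sum0 : \sum_z P x z * (r m - r z) = 0.
    under eq_bigr do rewrite mulrBr.
    rewrite sumrB -mulr_suml sum_trans // mul1r -rx.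
    by rewrite {1}r_fix /killed_step (negbTE xj) subrr.
  have gap_ge0 z : true -> 0 <= P x z * (r m - r z).
    by rewrite mulr_ge0 ?trans_ge0 // subr_ge0 r_max.
  move/eqP: (psumr_eq0P gap_ge0 gap_sum0 (i := y) isT).
  by rewrite mulf_eq0 gt_eqF ?trans_gt0 //= subr_eq0 => /eqP.
have max_path p x : path (adj w) x p -> r x = r m -> r (last x p) = r m.
  by elim: p x => [|y p IHp] x //= /andP [xy yp] rx; exact/IHp/(max_adj x).
have /connectP [p mp jE] := adj_connected m j.
by rewrite -rj0 jE max_path.
Qed.

(* [survival N x] is the probability that the walk started at x has not
   visited j by time N. *)
Definition survival N : V -> R := iter N killed_step (fun x => (x != j)%:R).

Lemma survival_ge0 N x : 0 <= survival N x.
Proof. by elim: N x => [|N IHN] x; rewrite ?ler0n ?killed_step_ge0. Qed.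

Lemma survivalS_le N x : survival N.+1 x <= survival N x.
Proof.
elim: N x => [|N IHN] x; last exact: killed_step_le.
rewrite /= /killed_step; case: (eqVneq x j) => [//|xj].
rewrite -[leRHS](sum_trans x xj); apply: ler_sum => y _.
by rewrite ler_piMr ?trans_ge0 // lern1 leq_b1.
Qed.

Lemma survival_cvg0 x : (fun N => survival N x) @ \oo --> 0.
Proof.
have survival_cvg y : cvgn (fun N => survival N y).
  apply: nonincreasing_is_cvgn.
    by apply/nonincreasing_seqP => N; exact: survivalS_le.
  by exists 0 => _ [N _ <-]; exact: survival_ge0.
pose escape y := limn (fun N => survival N y).
have escape_ge0 y : 0 <= escape y.
  by apply: limr_ge (survival_cvg y) _; apply: nearW => N; exact: survival_ge0.
have escape_fix y : escape y = killed_step escape y.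
  have := survival_cvg y; rewrite -cvg_shiftS => /(cvg_unique (@Rhausdorff R)); apply.
  rewrite /= /killed_step; case: eqP => _; first exact: cvg_cst.
  apply: cvg_big => // [|z _]; first exact: add_continuous.
  by apply: cvgMl_tmp; exact: survival_cvg.
by rewrite -(killed_harmonic_eq0 _ escape_ge0 escape_fix x); exact: survival_cvg.
Qed.

Definition path_cons {n} (x : V) (p : {ffun 'I_n.+1 -> V}) : {ffun 'I_n.+2 -> V} :=
  [ffun k : 'I_n.+2 => if val k is k'.+1 then p (inord k') else x].

Definition path_behead {n} (p : {ffun 'I_n.+2 -> V}) : {ffun 'I_n.+1 -> V} :=
  [ffun k : 'I_n.+1 => p (inord k.+1)].

Lemma path_cons_inord n x (p : {ffun 'I_n.+1 -> V}) k : (k <= n.+1)%N ->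
  path_cons x p (inord k) = if k is k'.+1 then p (inord k') else x.
Proof. by move=> kn; rewrite ffunE /= inordK. Qed.

Lemma path_cons_last n x (p : {ffun 'I_n.+1 -> V}) :
  path_cons x p ord_max = p ord_max.
Proof. by rewrite ffunE /=; congr (p _); apply/val_inj; rewrite /= inordK. Qed.

Lemma path_beheadK n x (p : {ffun 'I_n.+1 -> V}) :
  path_behead (path_cons x p) = p.
Proof. by apply/ffunP => k; rewrite ffunE path_cons_inord ?inord_val. Qed.

Lemma path_consK n x (p : {ffun 'I_n.+2 -> V}) :
  p ord0 = x -> path_cons x (path_behead p) = p.
Proof.
move=> p0; apply/ffunP => -[[|k] kn]; rewrite ffunE /=.
  by rewrite -p0; congr (p _); apply/val_inj.
by rewrite ffunE; congr (p _); apply/val_inj; rewrite /= !inordK.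
Qed.

Lemma big_path_cons (T : Type) (idx : T) (op : T -> T -> T) (F : V -> V -> T)
    n x (p : {ffun 'I_n.+1 -> V}) :
  \big[op/idx]_(k < n.+1) F (path_cons x p (inord k)) (path_cons x p (inord k.+1))
  = op (F x (p ord0)) (\big[op/idx]_(k < n) F (p (inord k)) (p (inord k.+1))).
Proof.
have inord0 : inord 0 = ord0 :> 'I_n.+1 by apply/val_inj; rewrite /= inordK.
rewrite big_ord_recl !path_cons_inord //= inord0; congr (op _ _).
apply: eq_bigr => k _; have k_lt := ltn_ord k.
by rewrite /bump /= add1n !path_cons_inord ?ltnS ?k_lt ?(ltnW k_lt).
Qed.

Lemma first_hit0_cons n x (p : {ffun 'I_n.+1 -> V}) : x != j ->
  first_hit0 x j (path_cons x p) = first_hit0 (p ord0) j p.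
Proof.
move=> xj; rewrite /first_hit0 path_cons_last ffunE /= !eqxx /=; congr (_ && _).
apply/forallP/forallP => [avoid k | avoid [[|k] k_lt]].
- have k_le : (k <= n)%N by rewrite -ltnS.
  by have := avoid (inord k.+1); rewrite path_cons_inord /= ?inordK ?inord_val ?ltnS.
- by rewrite ffunE /= xj.
- have k_le : (k <= n)%N by rewrite -ltnS.
  by have := avoid (inord k); rewrite ffunE /= inordK.
Qed.

Lemma Omega0_term0 x : Omega0_term w sigma x j 0 = if x == j then 1%:M else 0.
Proof.
rewrite /Omega0_term; case: (eqVneq x j) => [->|xj].
  rewrite (bigD1 [ffun => j]) /=; last first.
    by rewrite /first_hit0 !ffunE eqxx; apply/forallP.
  rewrite big1 ?addr0 => [|p /andP [/and3P [/eqP p0 _ _]]]; last first.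
    by apply: contraNeq => _; apply/eqP/ffunP => k; rewrite ffunE (ord1 k).
  by rewrite /path_prob /path_sig !big_ord0 scale1r.
apply: big1 => p /and3P [/eqP p0 /eqP p_last _].
by move: xj; rewrite -p0 -p_last (_ : ord_max = ord0) ?eqxx //; apply/val_inj.
Qed.

Lemma Omega0_termS n x :
  Omega0_term w sigma x j n.+1 = twisted_step (fun y => Omega0_term w sigma y j n) x.
Proof.
rewrite /twisted_step /Omega0_term; case: (eqVneq x j) => [->|xj].
  by apply: big1 => p /and3P [/eqP p0 _ /forallP /(_ ord0)]; rewrite p0 eqxx.
rewrite (reindex_onto (path_cons x) path_behead) => [|p /and3P [/eqP p0 _ _]];
  last exact: path_consK.
rewrite (eq_bigl (fun p : {ffun 'I_n.+1 -> V} => first_hit0 (p ord0) j p))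
  => [|p]; last first.
  by rewrite path_beheadK eqxx andbT first_hit0_cons.
rewrite (partition_big (fun p : {ffun 'I_n.+1 -> V} => p ord0) xpredT) //=; apply: eq_bigr => y _.
rewrite mulmx_sumr scaler_sumr; apply: eq_big => p.
  case: (eqVneq (p ord0) y) => [<-|py]; rewrite ?andbT // andbF.
  by apply/esym/negbTE; apply: contra py => /and3P [/eqP ->].
move=> /andP [_ /eqP p0].
rewrite /path_prob /path_sig !big_path_cons -/(path_prob _ _) -/(path_sig _ _) p0.
by rewrite -scalemxAr scalerA.
Qed.

Definition Omega0_trunc N x : 'M[R]_d := \sum_(n < N.+1) Omega0_term w sigma x j n.

Lemma Omega0_truncS N x :
  Omega0_trunc N.+1 x = Omega0_term w sigma x j 0 + twisted_step (Omega0_trunc N) x.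
Proof.
rewrite /Omega0_trunc big_ord_recl twisted_step_sum; congr (_ + _).
by apply: eq_bigr => n _; rewrite lift0 Omega0_termS.
Qed.

Lemma Omega0_trunc_j N : Omega0_trunc N j = 1%:M.
Proof.
case: N => [|N]; last by rewrite Omega0_truncS Omega0_term0 /twisted_step eqxx addr0.
by rewrite /Omega0_trunc big_ord1 Omega0_term0 eqxx.
Qed.

Lemma frob2_Omega0_trunc_le N x : frob2 (Omega0_trunc N x) <= d%:R.
Proof.
elim: N x => [|N IHN] x.
  by rewrite /Omega0_trunc big_ord1 Omega0_term0; case: eqP; rewrite ?frob2_1 ?frob2_0.
rewrite Omega0_truncS Omega0_term0; case: (eqVneq x j) => [->|xj].
  by rewrite /twisted_step eqxx addr0 frob2_1.
rewrite add0r; apply: le_trans (frob2_twisted_step_le d%:R _ (fun=> 1) _ _) _ => [y|].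
  by rewrite /= mulr1 IHN.
rewrite /killed_step (negbTE xj); under eq_bigr do rewrite mulr1.
by rewrite sum_trans // mulr1.
Qed.

Lemma frob2_Omega0_trunc_sub N k x :
  frob2 (Omega0_trunc (N + k) x - Omega0_trunc N x) <= d%:R * survival N x.
Proof.
elim: N x => [|N IHN] x.
  rewrite /= /Omega0_trunc big_ord1 Omega0_term0; case: (eqVneq x j) => [->|_].
    by rewrite -/(Omega0_trunc k j) Omega0_trunc_j subrr frob2_0 mulr0.
  by rewrite subr0 mulr1 frob2_Omega0_trunc_le.
rewrite addSn !Omega0_truncS opprD addrACA subrr add0r -twisted_stepB.
exact: frob2_twisted_step_le.
Qed.

Lemma Omega0_trunc_cvg x a b :
  (fun N => Omega0_trunc N x a b) @ \oo --> Omega0 w sigma x j a b.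
Proof.
have trunc_cvg : cvgn (fun N => Omega0_trunc N x a b).
  apply: (@cvgn_sqr_increments _ _ (fun N => d%:R * survival N x)) => [m n mn|].
    rewrite -(subnKC mn); apply: le_trans (frob2_Omega0_trunc_sub m (n - m) x).
    by have := sqr_entry_le_frob2 (Omega0_trunc (m + (n - m)) x - Omega0_trunc m x) a b;
      rewrite !mxE.
  by rewrite -(mulr0 d%:R); apply: cvgMl_tmp; exact: survival_cvg0.
set S := fun N => \sum_(n < N) Omega0_term w sigma x j n a b.
have truncE : (fun N => Omega0_trunc N x a b) = [sequence S N.+1]_N.
  by apply/funext => N; rewrite /Omega0_trunc summxE.
have S_cvg : S @ \oo --> limn (fun N => Omega0_trunc N x a b).
  by rewrite -cvg_shiftS -truncE.
by rewrite mxE -/S (cvg_lim (@Rhausdorff R) S_cvg).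
Qed.

Section HarmonicFunction.
Variable f : V -> 'M[R]_d.
Hypothesis f_harmonic : forall x, conn_laplacian w sigma f x = 0.

Lemma twisted_step_harmonic x : x != j -> twisted_step f x = f x.
Proof.
move=> xj; have := f_harmonic x; rewrite /conn_laplacian.
under eq_bigr do rewrite scalerBr.
rewrite sumrB -scaler_suml -/(deg w x) => /eqP; rewrite subr_eq0 => /eqP degf.
have deg_neq0 : deg w x != 0 by rewrite gt_eqF ?deg_gt0.
rewrite /twisted_step (negbTE xj) -[RHS]scale1r -(mulVf deg_neq0).
rewrite -scalerA degf scaler_sumr; apply: eq_bigr => y _.
by rewrite scalerA mulrC.
Qed.

Definition harmonic_remainder N : V -> 'M[R]_d :=
  iter N twisted_step (fun x => if x == j then 0 else f x).

Lemma harmonic_decomposition N x :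
  f x = Omega0_trunc N x *m f j + harmonic_remainder N x.
Proof.
elim: N x => [|N IHN] x.
  rewrite /Omega0_trunc big_ord1 Omega0_term0 /=.
  by case: eqP => [->|_]; rewrite ?mul1mx ?addr0 ?mul0mx ?add0r.
rewrite Omega0_truncS Omega0_term0 /=; case: (eqVneq x j) => [->|xj].
  by rewrite /twisted_step eqxx !addr0 mul1mx.
rewrite add0r -twisted_step_mulmxr -twisted_stepD -twisted_step_harmonic //.
by congr twisted_step; apply/funext => y; rewrite -IHN.
Qed.

Lemma frob2_harmonic_remainder_le N x :
  frob2 (harmonic_remainder N x) <= (\sum_y frob2 (f y)) * survival N x.
Proof.
elim: N x => [|N IHN] x /=; last exact: frob2_twisted_step_le.
case: eqP => _; first by rewrite frob2_0 mulr0.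
by rewrite mulr1; apply: (ler_sum_term (fun y => frob2 (f y))) => y; exact: frob2_ge0.
Qed.

Lemma harmonic_Omega0 x : f x = Omega0 w sigma x j *m f j.
Proof.
apply/matrixP => a b; rewrite mxE.
have decompE N :
    f x a b = \sum_c Omega0_trunc N x a c * f j c b + harmonic_remainder N x a b.
  by rewrite {1}(harmonic_decomposition N x) !mxE.
have trunc_cvg : (fun N => \sum_c Omega0_trunc N x a c * f j c b) @ \oo -->
    \sum_c Omega0 w sigma x j a c * f j c b.
  apply: cvg_big => [|c _]; first exact: add_continuous.
  by apply: cvgMr_tmp; exact: Omega0_trunc_cvg.
have remainder_cvg0 : (fun N => harmonic_remainder N x a b) @ \oo --> 0.
  set C := \sum_y frob2 (f y).
  apply: (@cvg0_sqr_le _ _ (fun N => C * survival N x)) => [N|].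
    exact: le_trans (sqr_entry_le_frob2 _ a b) (frob2_harmonic_remainder_le N x).
  by rewrite -(mulr0 C); apply: cvgMl_tmp; exact: survival_cvg0.
have const_cvg : (fun N => f x a b) @ \oo --> \sum_c Omega0 w sigma x j a c * f j c b + 0.
  by rewrite (funext decompE); exact: cvgD.
rewrite addr0 in const_cvg; exact: (cvg_unique (@Rhausdorff R) (cvg_cst (f x a b)) const_cvg).
Qed.

End HarmonicFunction.

End KilledWalk.

Theorem proposition4p7 (R : realType) (V : finType) (d : nat)
    (w : V -> V -> R) (sigma : V -> V -> 'M[R]_d) (f : V -> 'M[R]_d) :
  connection_graph w sigma ->
  (forall x : V, conn_laplacian w sigma f x = 0) ->
  forall i j : V, f i = Omega0 w sigma i j *m f j.
Proof.
move=> [_ w_ge0 _ connected sigma_edge] f_harmonic i j.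
have sigma_orthogonal x y : adj w x y -> sigma x y *m (sigma x y)^T = 1%:M.
  by case/sigma_edge.
exact: harmonic_Omega0.
Qed.
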